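(* Let $\beta,\gamma\in(0,1]$ with $\beta\le\gamma$, let $f$ be a modulus function, $m\ge0$ an integer, $\theta=(k_r)$ a lacunary sequence, and $p=(p_k)$ a sequence of positive reals with $0<h=\inf_kp_k\le p_k\le\sup_kp_k=H<\infty$. Then $w_p^\beta(\theta,f,F,\Delta^m)\subset S_\theta^\gamma(F,\Delta^m)$.
   Context: A fuzzy number is a map $X:\mathbb{R}\to[0,1]$ which is normal, fuzzy convex, upper semicontinuous, with compact closure of $\{t:X(t)>0\}$; $L(\mathbb{R})$ is the set of fuzzy numbers. Level sets $[X]^\alpha=\{t:X(t)\ge\alpha\}$ ($\alpha\in(0,1]$), $[X]^0=\overline{\{t:X(t)>0\}}$, are compact intervals $[u^\alpha,v^\alpha]$. Subtraction: $[X-Y]^\alpha=[u_1^\alpha-v_2^\alpha,v_1^\alpha-u_2^\alpha]$. Metric: $d(X,Y)=\sup_{\alpha\in[0,1]}\max\{|u_1^\alpha-u_2^\alpha|,|v_1^\alpha-v_2^\alpha|\}$. $(\Delta^0X)_k=X_k$, $(\Delta^1X)_k=X_k-X_{k+1}$, $(\Delta^mX)_k=(\Delta^1(\Delta^{m-1}X))_k$. A lacunary sequence is an increasing integer sequence $\theta=(k_r)_{r\ge0}$ with $k_0=0$, $h_r=k_r-k_{r-1}\to\infty$; $I_r=(k_{r-1},k_r]$. A modulus function is $f:[0,\infty)\to[0,\infty)$ with $f(x)=0$ iff $x=0$, $f(x+y)\le f(x)+f(y)$, $f$ increasing, and $f$ right-continuous at $0$. $w_p^\beta(\theta,f,F,\Delta^m)$: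 sequences $X$ of fuzzy numbers with some $X_0\in L(\mathbb{R})$ such that $\lim_r\frac{1}{h_r^\beta}\sum_{k\in I_r}[f(d(\Delta^mX_k,X_0))]^{p_k}=0$. $S_\theta^\gamma(F,\Delta^m)$: sequences $X$ with some $X_0\in L(\mathbb{R})$ such that for all $\varepsilon>0$, $\lim_r\frac{1}{h_r^\gamma}|\{k\in I_r:d(\Delta^mX_k,X_0)\ge\varepsilon\}|=0$. *)

From HB Require Import structures.
From mathcomp Require Import all_boot all_order all_algebra.
From mathcomp Require Import all_classical all_reals all_analysis.
Set Implicit Arguments. Unset Strict Implicit. Unset Printing Implicit Defensive.
Import Order.TTheory GRing.Theory Num.Theory.
Import numFieldNormedType.Exports.
Local Open Scope classical_set_scope.
Local Open Scope ring_scope.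

Section Fuzzy.
Variable R : realType.

Definition is_fuzzy (X : R -> R) : Prop :=
  [/\ (forall t, 0 <= X t <= 1),
      (exists t, X t = 1),
      (forall s t l, 0 <= l <= 1 ->
          Num.min (X s) (X t) <= X (l * s + (1 - l) * t)),
      (forall t e, 0 < e -> \forall s \near t, X s < X t + e)
    & compact (closure [set t | 0 < X t])].

Definition levelset (X : R -> R) (a : R) : set R :=
  if a == 0 then closure [set t | 0 < X t] else [set t | a <= X t].

Definition lo (X : R -> R) (a : R) : R := inf (levelset X a).
Definition hi (X : R -> R) (a : R) : R := sup (levelset X a).

(* endpoints (u^alpha, v^alpha) of the level sets of (Delta^m X)_k, using
   [X - Y]^a = [u1^a - v2^a, v1^a - u2^a] *)
Fixpoint Dlevel (X : nat -> R -> R) (m k : nat) (a : R) : R * R :=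
  match m with
  | 0 => (lo (X k) a, hi (X k) a)
  | m'.+1 => ((Dlevel X m' k a).1 - (Dlevel X m' k.+1 a).2,
              (Dlevel X m' k a).2 - (Dlevel X m' k.+1 a).1)
  end.

Definition dDelta (X : nat -> R -> R) (m k : nat) (X0 : R -> R) : R :=
  sup [set Num.max `|(Dlevel X m k a).1 - lo X0 a| `|(Dlevel X m k a).2 - hi X0 a|
      | a in `[0, 1]].

Definition is_modulus (f : R -> R) : Prop :=
  [/\ (forall x, 0 <= x -> 0 <= f x),
      (forall x, 0 <= x -> (f x = 0 <-> x = 0)),
      (forall x y, 0 <= x -> 0 <= y -> f (x + y) <= f x + f y),
      (forall x y, 0 <= x -> x <= y -> f x <= f y)
    & f x @[x --> 0^'+] --> 0].

Definition hr (theta : nat -> nat) (r : nat) : nat := (theta r - theta r.-1)%N.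

Definition lacunary (theta : nat -> nat) : Prop :=
  [/\ theta 0 = 0%N,
      (forall r, (theta r < theta r.+1)%N)
    & (fun r => (hr theta r)%:R : R) @ \oo --> +oo].

Definition w_space (beta : R) (theta : nat -> nat) (f : R -> R) (p : nat -> R)
    (m : nat) : set (nat -> R -> R) :=
  [set X | (forall k, is_fuzzy (X k)) /\
    exists X0, is_fuzzy X0 /\
      (fun r => ((hr theta r)%:R `^ beta)^-1 *
         \sum_((theta r.-1).+1 <= k < (theta r).+1)
             (f (dDelta X m k X0)) `^ (p k)) @ \oo --> 0].

Definition S_space (gamma : R) (theta : nat -> nat) (m : nat)
    : set (nat -> R -> R) :=
  [set X | (forall k, is_fuzzy (X k)) /\
    exists X0, is_fuzzy X0 /\
      forall eps, 0 < eps ->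
      (fun r => ((hr theta r)%:R `^ gamma)^-1 *
         (count (fun k => eps <= dDelta X m k X0)
            (index_iota (theta r.-1).+1 (theta r).+1))%:R) @ \oo --> 0].

End Fuzzy.

From HB Require Import structures.
From mathcomp Require Import all_boot all_order all_algebra.
From mathcomp Require Import all_classical all_reals all_analysis.
Import Order.TTheory GRing.Theory Num.Theory.
Import numFieldNormedType.Exports.
Set Implicit Arguments. Unset Strict Implicit. Unset Printing Implicit Defensive.
Local Open Scope classical_set_scope.
Local Open Scope ring_scope.

(* Markov's inequality on a block: every index k with d((Delta^m X)_k, X0) >= eps
   contributes at least c := min(1, f(eps)^H) to the sum of f(d)^(p_k), since
   f is increasing and 0 < p_k <= H.  Hence the eps-count over I_r is at most
   c^-1 times that sum, and dividing by h_r^gamma >= h_r^beta turns the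
   w_p^beta average into an upper bound for the S_theta^gamma density. *)

Lemma mulr_count_le_sum (R : numDomainType) (T : Type) (c : R) (P : pred T)
    (g : T -> R) (s : seq T) :
  0 <= c -> (forall k, 0 <= g k) -> (forall k, P k -> c <= g k) ->
  c * (count P s)%:R <= \sum_(k <- s) g k.
Proof.
move=> c0 g0 gc; elim: s => [|x s IHs]; first by rewrite big_nil mulr0.
rewrite big_cons /= natrD mulrDr; apply: lerD => //.
by case: (boolP (P x)) => [/gc|_]; rewrite ?mulr1 ?mulr0.
Qed.

Lemma cvg0_le_scale (R : realType) (u w : nat -> R) (c : R) :
  (\forall n \near \oo, 0 <= u n <= c * w n) -> w @ \oo --> 0 -> u @ \oo --> 0.
Proof.
move=> uw w0; apply: (squeeze_cvgr uw); first exact: cvg_cst.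
by have := cvgMl_tmp (a := c) w0; rewrite mulr0; apply.
Qed.

Lemma modulus_gt0 (R : realType) (f : R -> R) (x : R) :
  is_modulus f -> 0 < x -> 0 < f x.
Proof.
move=> [f0 fz _ _ _] x0; rewrite lt_neqAle f0 ?ltW // andbT.
by apply/eqP => /esym /(fz _ (ltW x0)) x_eq0; rewrite x_eq0 ltxx in x0.
Qed.

Lemma min1_powR_le (R : realType) (a q H : R) :
  0 < a -> 0 <= q <= H -> Num.min 1 (a `^ H) <= a `^ q.
Proof.
move=> a0 /andP[q0 qH]; rewrite ge_min; case: (leP 1 a) => a1.
  by rewrite -(powRr0 a) ler_powR.
by rewrite ger_powR ?orbT // a0 ltW.
Qed.

Lemma count_le_sum_modulus_powR (R : realType) (f : R -> R) (p d : nat -> R)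
    (H eps : R) (s : seq nat) :
  is_modulus f -> 0 < eps -> (forall k, 0 <= p k <= H) ->
  Num.min 1 (f eps `^ H) * (count (fun k => eps <= d k) s)%:R
    <= \sum_(k <- s) f (d k) `^ p k.
Proof.
move=> fmod eps0 pH; have feps0 := modulus_gt0 fmod eps0.
have [f0 _ _ fmon _] := fmod.
apply: mulr_count_le_sum => [|k|k eps_d]; first by rewrite le_min ler01 powR_ge0.
  exact: powR_ge0.
apply: (le_trans (min1_powR_le feps0 (pH k))).
have [p0 _] := andP (pH k).
have d0 : 0 <= d k by apply: le_trans eps_d; apply: ltW.
by apply: ge0_ler_powR; rewrite ?nnegrE ?f0 ?fmon // ltW.
Qed.

Lemma hr_ge1 (theta : nat -> nat) (r : nat) :
  (forall r, (theta r < theta r.+1)%N) -> (0 < r)%N -> (1 <= hr theta r)%N.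
Proof. by move=> th_inc r0; rewrite subn_gt0 -{2}(prednK r0). Qed.

Lemma lef_invpowR (R : realType) (x beta gamma : R) :
  1 <= x -> beta <= gamma -> (x `^ gamma)^-1 <= (x `^ beta)^-1.
Proof.
move=> x1 bg; have x0 : 0 < x by apply: lt_le_trans x1.
by rewrite lef_pV2 ?posrE ?powR_gt0 // ler_powR.
Qed.

Theorem theorem3p2 (R : realType) (beta gamma : R) (f : R -> R) (m : nat)
    (theta : nat -> nat) (p : nat -> R) :
  0 < beta <= 1 -> 0 < gamma <= 1 -> beta <= gamma ->
  is_modulus f -> lacunary R theta ->
  (forall k, 0 < p k) -> 0 < inf (range p) -> has_ubound (range p) ->
  w_space beta theta f p m `<=` S_space gamma theta m.
Proof.
move=> _ _ bg fmod [_ th_inc _] p0 _ p_ub X [X_fz [X0 [X0_fz w_cvg]]].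
split=> //; exists X0; split=> // eps eps0.
pose c := Num.min 1 (f eps `^ sup (range p)).
have pH k : 0 <= p k <= sup (range p).
  by rewrite ltW //= ub_le_sup //; exists k.
have c0 : 0 < c by rewrite lt_min ltr01 powR_gt0 // modulus_gt0.
apply: (cvg0_le_scale (c := c^-1) _ w_cvg); near=> r.
have h1 : 1 <= (hr theta r)%:R :> R.
  by rewrite ler1n hr_ge1 //; near: r; exists 1%N.
have hb0 : 0 < (hr theta r)%:R `^ beta by rewrite powR_gt0 // (lt_le_trans ltr01).
rewrite mulr_ge0 ?invr_ge0 ?powR_ge0 //= mulrCA.
apply: le_trans (ler_wpM2r _ (lef_invpowR h1 bg)) _ => //.
apply: ler_wpM2l; first by rewrite invr_ge0 ltW.
rewrite -(ler_pM2l c0) mulrA mulfV ?gt_eqF // mul1r.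
exact: (count_le_sum_modulus_powR _ _ fmod eps0 pH).
Unshelve. all: by end_near.
Qed.
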